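(* Let $T$ be a finite rooted unweighted tree with root $r_T$ and height $h_T$, and consider the Hydra game on $T$ played by $\mathrm{HERC}$. Define the potential $\Phi = 4\, h_T\, H(\mathrm{rank}(r_T)) + \sum_{w \in T} \eta(w)\,\mathrm{level}(w)$. Fix any step in which the adversary kills an alive node $u$ (with the game not yet ended before the step) and, as a result, $\mathrm{HERC}$ changes its distribution from $\eta$ to $\eta'$. Let $\Delta\mathrm{HERC} = \sum_{w \neq u} (\eta'(w)-\eta(w))\,\mathrm{dist}(u,w)$ be the cost incurred by $\mathrm{HERC}$ in this step and let $\Delta\Phi$ be the resulting change of $\Phi$. Then $\Delta\Phi \le -\Delta\mathrm{HERC}$.
   Context: Hydra game: it is played on a fixed finite rooted unweighted tree $T$ known in advance. Each node is asleep, alive, or dead. Initially the root $r_T$ is alive and all other nodes are asleep. In each step the adversary picks an alive node $w$, makes it dead, and makes all its children alive. The game ends when all nodes except one are dead. $\mathrm{dist}(u,w)$ is the length of the shortest path between $u$ and $w$ in $T$. $\mathrm{rank}(u)$ is the number of non-dead leaves in the subtree rooted at $u$ (at the current time); $\mathrm{level}(u)$ is the height of the subtree rooted at $u$ (leaves have level $0$, $h_T=\mathrm{level}(r_T)$). $H(n)=\sum_{i=1}^n 1/i$. Algorithm $\mathrm{HERC}$ maintains the probability distribution $\eta$ with $\eta(u)=\mathrm{rank}(u)/\mathrm{rank}(r_T)$ for alive $u$ and $\eta(u)=0$ otherwise. When $u$ is killed, the new distribution $\eta'$ has $\eta'(u)=0$ and: if $u$ is not a leaf, $\eta'(w)=(\mathrm{rank}(w)/\mathrm{rank}(u))\,\eta(u)$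 for each child $w$ of $u$ and $\eta'=\eta$ elsewhere; if $u$ is a leaf, $\eta'(w)=\eta(w)/(1-\eta(u))$ for all $w\neq u$. Moving probability mass $p$ from node $u$ to node $w$ is charged cost $p\cdot\mathrm{dist}(u,w)$. *)

From mathcomp Require Import all_boot all_order all_algebra.
Set Implicit Arguments. Unset Strict Implicit. Unset Printing Implicit Defensive.
Import Order.TTheory GRing.Theory Num.Theory.

(* A finite rooted tree on the finite node type T, given by its root r and a
   parent function: parent r = r, and every node reaches r by iterating parent
   (this forces acyclicity). The edges are {v, parent v} for v <> r. *)
Definition is_rooted_tree (T : finType) (r : T) (parent : T -> T) : Prop :=
  parent r = r /\ forall v : T, exists k : nat, iter k parent v = r.

Section Tree.
Variables (T : finType) (r : T) (parent : T -> T).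

Definition is_child (u w : T) : bool := (w != r) && (parent w == u).

Definition is_leaf (u : T) : bool := [forall w, ~~ is_child u w].

Definition desc (u w : T) : bool := [exists k : 'I_#|T|, iter k parent w == u].

Definition adj : rel T := fun x y => is_child y x || is_child x y.

(* dist u w : length of a shortest path from u to w in the tree
   (every simple path has length < #|T|) *)
Definition dist (u w : T) : nat :=
  \big[minn/#|T|]_(n < #|T| |
       [exists p : n.-tuple T, path adj u p && (last u p == w)]) (n : nat).

Definition level (u : T) : nat := \max_(w | desc u w) dist u w.

Definition height : nat := level r.

Inductive status := Asleep | Alive | Dead.
Definition is_alive (x : status) : bool := if x is Alive then true else false.
Definition is_dead (x : status) : bool := if x is Dead then true else false.

Definition state := T -> status.

Definition init_state : state := fun w => if w == r then Alive else Asleep.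

Definition kill (s : state) (u : T) : state :=
  fun w => if w == u then Dead else if is_child u w then Alive else s w.

Definition game_ended (s : state) : bool := #|[set w | ~~ is_dead (s w)]| == 1%N.

Inductive reachable : state -> Prop :=
| reach_init : reachable init_state
| reach_step s u : reachable s -> ~~ game_ended s -> is_alive (s u) ->
    reachable (kill s u).

Definition rank (s : state) (u : T) : nat :=
  #|[set w | is_leaf w && desc u w && ~~ is_dead (s w)]|.

Local Open Scope ring_scope.
Variable R : realFieldType.

Definition harmonic (n : nat) : R := \sum_(i < n) (i.+1%:R)^-1.

Definition eta (s : state) (w : T) : R :=
  if is_alive (s w) then (rank s w)%:R / (rank s r)%:R else 0.

Definition herc_update (s : state) (u : T) (w : T) : R :=
  if w == u then 0
  else if ~~ is_leaf u then
         (if is_child u w then ((rank s w)%:R / (rank s u)%:R) * eta s u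
          else eta s w)
       else eta s w / (1 - eta s u).

Definition herc_cost (s : state) (u : T) : R :=
  \sum_(w | w != u) (herc_update s u w - eta s w) * (dist u w)%:R.

(* potential Phi = 4 h_T H(rank(r_T)) + sum_w et(w) level(w),
   evaluated for a game state s (giving rank r_T) and a distribution et *)
Definition potential (s : state) (et : T -> R) : R :=
  4%:R * (height%:R) * harmonic (rank s r) + \sum_w et w * (level w)%:R.

End Tree.

(* Expanding the potential, ΔΦ + ΔHERC equals
     4 h_T (H(N') - H(N)) - η(u) level(u)
       + Σ_{w ≠ u} (η'(w) - η(w)) (level(w) + dist(u, w)),
   where N and N' count the live leaves before and after the step.
   In a reachable state the strict descendants of an alive node are asleep, so
   distinct alive nodes, and distinct children of one node, own disjoint sets of
   live leaves.  If u is internal then N' = N, and the mass η(u) moves to the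
   children of u, which were asleep; a child w has level(w) + dist(u, w) <=
   level(u) and the ranks of the children add up to at most rank(u), so the sum
   is at most η(u) level(u).  If u is a leaf then N' = N - 1, so the harmonic
   term drops by 4 h_T / N >= 4 h_T η(u), while rescaling the other masses by
   1 / (1 - η(u)) moves a total mass of at most η(u), each unit paying a
   distance plus level of at most 4 h_T. *)

From mathcomp Require Import all_boot all_order all_algebra.
From mathcomp Require Import zify ring lra.
Set Implicit Arguments. Unset Strict Implicit. Unset Printing Implicit Defensive.
Import Order.TTheory GRing.Theory Num.Theory.

Lemma leq_sum_card_disjoint (T I : finType) (P : pred I) (A : I -> {set T})
    (B : {set T}) :
  (forall i, P i -> A i \subset B) ->
  (forall i j x, P i -> P j -> x \in A i -> x \in A j -> i = j) ->
  \sum_(i | P i) #|A i| <= #|B|.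
Proof.
move=> subB disjA.
rewrite (eq_bigr (fun i => \sum_(x in A i) 1)) => [|i _]; last by rewrite sum1_card.
rewrite (exchange_big_dep (mem B)) /= => [|i x /subB/subsetP]; last exact.
rewrite -sum1_card leq_sum // => x _.
rewrite sum1dep_card; apply/card_le1P => i; rewrite inE => /andP[Pi xAi] j.
by rewrite !inE; apply/andP/eqP => [[Pj xAj]|->]; [exact: (disjA _ _ x) | split].
Qed.

Lemma bigmin_le_cond (I : finType) (P : pred I) (F : I -> nat) (d : nat) j :
  P j -> \big[minn/d]_(i | P i) F i <= F j.
Proof.
move=> Pj; have : j \in index_enum I by rewrite mem_index_enum.
elim: (index_enum I) => //= i s IH; rewrite inE big_cons => /predU1P[<-|js].
  by rewrite Pj geq_minl.
by case: (P i); rewrite ?geq_min IH ?orbT.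
Qed.

Section Ratios.
Variable R : realFieldType.
Local Open Scope ring_scope.

Lemma sum_ratio_le1 (I : finType) (P : pred I) (n : I -> nat) (m : nat) :
  (\sum_(i | P i) n i <= m)%N -> \sum_(i | P i) (n i)%:R / m%:R <= 1 :> R.
Proof.
move=> sum_le; rewrite -mulr_suml -natr_sum.
have [->|m_gt0] := posnP m; first by rewrite invr0 mulr0.
by rewrite ler_pdivrMr ?ltr0n // mul1r ler_nat.
Qed.

Lemma sum_rescale_le (I : finType) (P : pred I) (x c : I -> R) (a C : R) :
  0 <= a -> 0 <= C -> (forall i, P i -> 0 <= x i) ->
  (forall i, P i -> 0 <= c i <= C) -> \sum_(i | P i) x i <= 1 - a ->
  \sum_(i | P i) (x i / (1 - a) - x i) * c i <= C * a.
Proof.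
move=> a_ge0 C_ge0 x_ge0 c_bnd sum_le.
have [a_lt1|a_ge1] := ltrP a 1; last first.
  rewrite (le_trans _ (mulr_ge0 C_ge0 a_ge0)) // sumr_le0 // => i Pi.
  have /andP[c_ge0 _] := c_bnd i Pi.
  rewrite mulr_le0_ge0 // subr_le0 (le_trans _ (x_ge0 i Pi)) //.
  by rewrite mulr_ge0_le0 ?x_ge0 // invr_le0 subr_le0.
have a1_gt0 : 0 < 1 - a by rewrite subr_gt0.
have -> : \sum_(i | P i) (x i / (1 - a) - x i) * c i
          = a / (1 - a) * \sum_(i | P i) x i * c i.
  by rewrite mulr_sumr; apply: eq_bigr => i _; field; rewrite gt_eqF.
have sum_xc : \sum_(i | P i) x i * c i <= C * (1 - a).
  rewrite (le_trans _ (ler_wpM2l C_ge0 sum_le)) // mulr_sumr ler_sum // => i Pi.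
  by rewrite mulrC ler_wpM2r ?x_ge0 //; case/andP: (c_bnd i Pi).
have ratio_ge0 : 0 <= a / (1 - a) by rewrite divr_ge0 // ltW.
apply: le_trans (ler_wpM2l ratio_ge0 sum_xc) _.
have -> // : a / (1 - a) * (C * (1 - a)) = C * a.
by field; rewrite gt_eqF.
Qed.

Lemma harmonicS n : harmonic R n.+1 = harmonic R n + n.+1%:R^-1.
Proof. by rewrite /harmonic big_ord_recr. Qed.

End Ratios.

Section RootedTree.
Variables (T : finType) (r : T) (parent : T -> T).
Hypothesis parent_r : parent r = r.
Hypothesis parent_reaches_r : forall v, exists k, iter k parent v = r.

Lemma iter_parent_r n : iter n parent r = r.
Proof. by elim: n => //= n ->. Qed.

Lemma parent_cycle_r m y : iter m.+1 parent y = y -> y = r.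
Proof.
move=> cyc; have [k yk] := parent_reaches_r y.
have cycn n : iter (m.+1 * n) parent y = y.
  by elim: n => [|n IH]; rewrite ?muln0 // mulnS iterD IH cyc.
by rewrite -(cycn k) -(subnK (leq_pmull k (ltn0Sn m))) iterD yk iter_parent_r.
Qed.

Lemma descP v x : reflect (exists k, iter k parent x = v) (desc parent v x).
Proof.
apply: (iffP existsP) => [[k /eqP <-]|[k <-]]; first by exists k.
have xk := fconnect_iter parent k x.
have lt_card : findex parent x (iter k parent x) < #|T|.
  exact: leq_trans (findex_max xk) (max_card _).
by exists (Ordinal lt_card); rewrite /= iter_findex.
Qed.

Lemma desc_refl v : desc parent v v.
Proof. by apply/descP; exists 0. Qed.

Lemma desc_r x : desc parent r x.
Proof. exact/descP/parent_reaches_r. Qed.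

Lemma desc_trans u v x : desc parent u v -> desc parent v x -> desc parent u x.
Proof.
by move=> /descP[i <-] /descP[j <-]; apply/descP; exists (i + j); rewrite iterD.
Qed.

Lemma desc_parent v x : x != v -> desc parent v x -> desc parent v (parent x).
Proof.
move=> xv /descP[[|k] /= xk]; first by rewrite xk eqxx in xv.
by apply/descP; exists k; rewrite -iterSr.
Qed.

Lemma desc_antisym v w : desc parent v w -> desc parent w v -> v = w.
Proof.
move=> /descP[i wi] /descP[j vj].
have cyc : iter (i + j) parent v = v by rewrite iterD vj wi.
case: i wi cyc => [|i] wi; first by move=> _; apply: esym.
rewrite addSn => /parent_cycle_r v_r.
by rewrite -vj v_r iter_parent_r.
Qed.

Lemma desc_total v w x :
  desc parent v x -> desc parent w x -> desc parent v w || desc parent w v.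
Proof.
move=> /descP[i xi] /descP[j xj]; apply/orP.
have [ij|ji] := leqP i j.
  by right; apply/descP; exists (j - i); rewrite -xi -iterD subnK.
by left; apply/descP; exists (i - j); rewrite -xj -iterD subnK // ltnW.
Qed.

Lemma child_desc u w : is_child r parent u w -> desc parent u w.
Proof. by case/andP=> _ /eqP pw; apply/descP; exists 1. Qed.

Lemma child_neq u w : is_child r parent u w -> w != u.
Proof.
case/andP=> wr /eqP pw; apply: contra wr => /eqP wu.
by apply/eqP/(@parent_cycle_r 0); rewrite /= pw wu.
Qed.

Lemma desc_strict_child u x :
  desc parent u x -> x != u -> exists2 w, is_child r parent u w & desc parent w x.
Proof.
move=> /descP[k]; elim: k x => [|k IH] x xk xu; first by rewrite -xk eqxx in xu.
have [kr|kr] := eqVneq (iter k parent x) r.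
  by apply: IH xu; rewrite kr -parent_r -kr.
exists (iter k parent x); first by rewrite /is_child kr -iterS xk eqxx.
by apply/descP; exists k.
Qed.

Lemma leaf_desc u x : is_leaf r parent u -> desc parent u x -> x = u.
Proof.
move=> leaf_u ux; apply/eqP/negP => /negP xu.
have [w uw _] := desc_strict_child ux xu.
by move/forallP/(_ w): leaf_u; rewrite uw.
Qed.

Lemma children_desc_eq u w1 w2 :
  is_child r parent u w1 -> is_child r parent u w2 -> desc parent w1 w2 -> w1 = w2.
Proof.
move=> uw1 uw2 w12; apply/eqP/negP => /negP w12n.
have w1u : desc parent w1 u.
  by case/andP: uw2 => _ /eqP <-; rewrite desc_parent // eq_sym.
by move: (child_neq uw1); rewrite (desc_antisym w1u (child_desc uw1)) eqxx.
Qed.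

Lemma adj_sym : symmetric (adj r parent).
Proof. by move=> x y; rewrite /adj orbC. Qed.

Lemma dist_le_path u w (p : seq T) :
  path (adj r parent) u p -> last u p = w -> size p < #|T| ->
  dist r parent u w <= size p.
Proof.
move=> up pw p_lt; apply: (@bigmin_le_cond _ _ _ _ (Ordinal p_lt)) => /=.
by apply/existsP; exists (in_tuple p); rewrite /= up pw eqxx.
Qed.

Lemma dist_le_card u w : dist r parent u w <= #|T|.
Proof.
apply: (big_ind (fun n => n <= #|T|)) => // [m n m_le _ | i _].
  exact: leq_trans (geq_minl m n) m_le.
exact: ltnW.
Qed.

Lemma dist_path u w : dist r parent u w < #|T| ->
  exists2 p : seq T, path (adj r parent) u p /\ last u p = w
                   & size p = dist r parent u w.
Proof.
rewrite /dist; elim/big_ind: _ => [|m n IHm IHn|n /existsP[p /andP[up /eqP pw]] _].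
- by rewrite ltnn.
- by rewrite /minn; case: ifP.
- by exists p; rewrite ?size_tuple.
Qed.

Lemma dist_le_rev u w : dist r parent w u <= dist r parent u w.
Proof.
have [uw_lt|] := ltnP (dist r parent u w) #|T|; last exact: leq_trans (dist_le_card _ _).
have [p [up pw] size_p] := dist_path uw_lt.
rewrite -size_p -(size_belast u) -size_rev; apply: dist_le_path.
- by rewrite -pw rev_path; apply: sub_path up => x y; rewrite adj_sym.
- by case: p {up size_p} pw => [|a p] /= <- //; rewrite rev_cons last_rcons.
- by rewrite size_rev size_belast size_p.
Qed.

Lemma dist_sym u w : dist r parent u w = dist r parent w u.
Proof. by apply/eqP; rewrite eqn_leq !dist_le_rev. Qed.

Lemma dist_triangle a b c :
  dist r parent a c <= dist r parent a b + dist r parent b c.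
Proof.
have [lt_card|] := ltnP (dist r parent a b + dist r parent b c) #|T|; last first.
  exact: leq_trans (dist_le_card _ _).
have [p [ap pb] size_p] := dist_path (leq_ltn_trans (leq_addr _ _) lt_card).
have [q [bq qc] size_q] := dist_path (leq_ltn_trans (leq_addl _ _) lt_card).
rewrite -size_p -size_q -size_cat; apply: dist_le_path.
- by rewrite cat_path ap pb bq.
- by rewrite last_cat pb.
- by rewrite size_cat size_p size_q.
Qed.

Lemma reaches_r y : exists k, iter k parent y == r.
Proof. by have [k yk] := parent_reaches_r y; exists k; apply/eqP. Qed.

Definition depth y := ex_minn (reaches_r y).

Lemma iter_depth y : iter (depth y) parent y = r.
Proof. by rewrite /depth; case: ex_minnP => k /eqP. Qed.

Lemma depth_min y k : iter k parent y = r -> depth y <= k.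
Proof. by rewrite /depth; case: ex_minnP => m _ min_m /eqP /min_m. Qed.

Lemma depth_lt_card y : depth y < #|T|.
Proof.
have /existsP[k /eqP/depth_min le_k] := desc_r y.
exact: leq_ltn_trans le_k (ltn_ord k).
Qed.

Lemma depth_parent y : y != r -> depth y = (depth (parent y)).+1.
Proof.
move=> yr; apply/eqP; rewrite eqn_leq depth_min ?iterSr ?iter_depth //=.
move: (iter_depth y); case: (depth y) => [/= y_r|k]; first by rewrite y_r eqxx in yr.
by rewrite iterSr => /depth_min.
Qed.

Lemma depth_adj y z : adj r parent y z -> depth z <= (depth y).+1.
Proof.
by case/orP=> /andP[nr /eqP <-]; rewrite (depth_parent nr) // leqW.
Qed.

Lemma depth_le_dist a b : depth b <= depth a + dist r parent a b.
Proof.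
have [ab_lt|] := ltnP (dist r parent a b) #|T|; last first.
  by move/(leq_trans (depth_lt_card b))/ltnW/leq_trans; apply; rewrite leq_addl.
have [p [ap <-] <-] := dist_path ab_lt.
elim: p a ap {ab_lt} => [|c p IH] a /=; first by rewrite addn0.
case/andP=> /depth_adj ac /IH; rewrite addnS => /leq_trans; apply.
by rewrite -addSn leq_add2r.
Qed.

Lemma path_parent k x :
  iter k parent x != r -> path (adj r parent) x (traject parent (parent x) k).
Proof.
elim: k x => [|k IH] x //= kx.
have xr : x != r by apply: contra kx => /eqP ->; rewrite iter_parent_r parent_r.
by rewrite IH -?iterSr // /adj /is_child xr eqxx.
Qed.

Lemma dist_le_iter_parent k x :
  iter k parent x != r -> k < #|T| -> dist r parent x (iter k parent x) <= k.
Proof.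
move=> kx k_lt; rewrite -{2}(size_traject parent (parent x) k).
by apply: dist_le_path; rewrite ?path_parent ?last_traject ?size_traject.
Qed.

Lemma depth_iter_parent k x :
  iter k parent x != r -> depth x = depth (iter k parent x) + k.
Proof.
elim: k x => [|k IH] x kx; first by rewrite addn0.
have xr : x != r by apply: contra kx => /eqP ->; rewrite iter_parent_r.
by rewrite depth_parent // IH -?iterSr // addnS.
Qed.

Lemma level_child u w :
  is_child r parent u w -> (level r parent w).+1 <= level r parent u.
Proof.
move=> uw; have /andP[wr /eqP pw] := uw.
have [x wx ->] : {x | desc parent w x & level r parent w = dist r parent w x}.
  by apply: eq_bigmax_cond; apply/card_gt0P; exists w; apply: desc_refl.
have /existsP[[k /= k_lt] /eqP xk] := wx.
have dist_wx : dist r parent w x <= k.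
  by rewrite dist_sym -xk dist_le_iter_parent ?xk.
have depth_x : depth x = depth u + k.+1.
  by rewrite (depth_iter_parent (k := k)) xk // depth_parent // pw addSnnS.
have dist_ux : dist r parent u x <= level r parent u.
  by apply: leq_bigmax_cond; apply: desc_trans (child_desc uw) wx.
(* x lies k + 1 parent steps below u, and depth grows by at most one per edge. *)
have := depth_le_dist u x; rewrite depth_x; lia.
Qed.

Lemma dist_le_2height a b : dist r parent a b <= (height r parent).*2.
Proof.
have dist_r y : dist r parent r y <= height r parent by apply/leq_bigmax_cond/desc_r.
rewrite -addnn (leq_trans (dist_triangle a r b)) // leq_add ?dist_r //.
by rewrite dist_sym dist_r.
Qed.

Lemma dist_child u w : is_child r parent u w -> dist r parent u w <= 1.
Proof.
move=> uw; apply: (@dist_le_path _ _ [:: w]) => //=; first by rewrite /adj uw orbT.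
by have := max_card [set u; w]; rewrite cards2 eq_sym child_neq.
Qed.

Lemma level_le_2height a : level r parent a <= (height r parent).*2.
Proof. by apply/bigmax_leqP => x _; apply: dist_le_2height. Qed.

Definition asleep_below (s : state T) : Prop :=
  forall v x, is_alive (s v) -> x != v -> desc parent v x -> s x = Asleep.

Lemma reachable_asleep_below s : reachable r parent s -> asleep_below s.
Proof.
elim=> [|{}s u _ IH _ alive_u] v x.
  by rewrite /init_state; case: eqP => // -> _ /negbTE ->.
rewrite /kill; case: eqP => // /eqP vu.
have child_below y : x != y -> desc parent y x -> is_child r parent u x ->
    desc parent y u.
  by move=> xy yx /andP[_ /eqP <-]; apply: desc_parent.
case: ifP => [uv _ xv vx | _ alive_v xv vx].
- have not_vu : ~~ desc parent v u.
    by apply: contra vu => /desc_antisym/(_ (child_desc uv)) ->.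
  have xu : x != u by apply: contraNneq not_vu => <-.
  have sx := IH u x alive_u xu (desc_trans (child_desc uv) vx).
  rewrite (negbTE xu) sx; case: ifP => // /(child_below _ xv vx).
  by rewrite (negbTE not_vu).
- have sx := IH v x alive_v xv vx.
  have xu : x != u by apply: contraTneq alive_u => <-; rewrite sx.
  rewrite (negbTE xu) sx; case: ifP => // /(child_below _ xv vx) vu_desc.
  by move: alive_u; rewrite (IH v u) // eq_sym.
Qed.

Definition live_leaves (s : state T) (w : T) : {set T} :=
  [set x | is_leaf r parent x && desc parent w x && ~~ is_dead (s x)].

Lemma rank_live_leaves s w : rank r parent s w = #|live_leaves s w|.
Proof. by []. Qed.

Lemma live_leaves_kill s u w : asleep_below s -> is_alive (s u) ->
  live_leaves (kill r parent s u) w = live_leaves s w :\ u.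
Proof.
move=> asleep_s alive_u; apply/setP => x; rewrite !inE /kill.
case: eqP => [->|/eqP xu]; first by rewrite andbF.
case: ifP => //= ux.
by rewrite (asleep_s u x alive_u xu (child_desc ux)).
Qed.

Lemma sum_rank_alive s : asleep_below s ->
  \sum_(w | is_alive (s w)) rank r parent s w <= rank r parent s r.
Proof.
move=> asleep_s; apply: (leq_sum_card_disjoint (A := live_leaves s)) => [w _|v w x].
  by apply/subsetP => x; rewrite !inE desc_r => /andP[/andP[-> _] ->].
rewrite !inE => alive_v alive_w /andP[/andP[_ vx] _] /andP[/andP[_ wx] _].
apply/eqP/negP => /negP vw.
case/orP: (desc_total vx wx) => [/(asleep_s v w alive_v) | /(asleep_s w v alive_w)].
  by rewrite eq_sym => /(_ vw) sw; rewrite sw in alive_w.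
by move=> /(_ vw) sv; rewrite sv in alive_v.
Qed.

Lemma sum_rank_children s u :
  \sum_(w | is_child r parent u w) rank r parent s w <= rank r parent s u.
Proof.
apply: (leq_sum_card_disjoint (A := live_leaves s)) => [w uw|w1 w2 x uw1 uw2].
  apply/subsetP => x; rewrite !inE => /andP[/andP[-> wx] ->].
  by rewrite (desc_trans (child_desc uw) wx).
rewrite !inE => /andP[/andP[_ w1x] _] /andP[/andP[_ w2x] _].
case/orP: (desc_total w1x w2x); first exact: (children_desc_eq uw1 uw2).
by move/(children_desc_eq uw2 uw1).
Qed.

Lemma rank_leaf_le1 s u : is_leaf r parent u -> rank r parent s u <= 1.
Proof.
move=> leaf_u; rewrite -(cards1 u) subset_leq_card //.
by apply/subsetP => x; rewrite !inE => /andP[/andP[_ /(leaf_desc leaf_u) ->] _].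
Qed.

Lemma rank_kill_leaf s u : asleep_below s -> is_alive (s u) -> is_leaf r parent u ->
  rank r parent s r = (rank r parent (kill r parent s u) r).+1.
Proof.
move=> asleep_s alive_u leaf_u.
rewrite !rank_live_leaves live_leaves_kill // (cardsD1 u).
by rewrite inE leaf_u desc_r; case: (s u) alive_u.
Qed.

Lemma rank_kill_inner s u : asleep_below s -> is_alive (s u) -> ~~ is_leaf r parent u ->
  rank r parent (kill r parent s u) r = rank r parent s r.
Proof.
move=> asleep_s alive_u inner_u.
rewrite !rank_live_leaves live_leaves_kill // [RHS](cardsD1 u).
by rewrite inE (negbTE inner_u).
Qed.

Section HercStep.
Local Open Scope ring_scope.
Variables (R : realFieldType) (s : state T) (u : T).
Hypotheses (asleep_s : asleep_below s) (alive_u : is_alive (s u)).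

Local Notation e := (eta r parent R s).
Local Notation e' := (herc_update r parent R s u).
Local Notation lev w := ((level r parent w)%:R : R).
Local Notation shift_cost :=
  (\sum_(w | w != u) (e' w - e w) * (lev w + (dist r parent u w)%:R)).

Lemma eta_ge0 w : 0 <= e w.
Proof. by rewrite /eta; case: ifP => // _; rewrite divr_ge0 ?ler0n. Qed.

Lemma sum_eta_le1 : \sum_w e w <= 1.
Proof.
have -> : \sum_w e w
          = \sum_(w | is_alive (s w)) (rank r parent s w)%:R / (rank r parent s r)%:R.
  by rewrite [RHS]big_mkcond; apply: eq_bigr => w _; rewrite /eta; case: ifP.
exact/sum_ratio_le1/sum_rank_alive.
Qed.

Lemma potential_step_cost :
  potential r parent (kill r parent s u) e' - potential r parent s e
    + herc_cost r parent R s u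
  = 4%:R * (height r parent)%:R * (harmonic R (rank r parent (kill r parent s u) r)
                                    - harmonic R (rank r parent s r))
    - e u * lev u + shift_cost.
Proof.
have e'_u : e' u = 0 by rewrite /herc_update eqxx.
rewrite /potential /herc_cost [\sum_w e' w * _](bigD1 u) // [\sum_w e w * _](bigD1 u) //=.
have -> : shift_cost = \sum_(w | w != u) e' w * lev w - \sum_(w | w != u) e w * lev w
                       + \sum_(w | w != u) (e' w - e w) * (dist r parent u w)%:R.
  by rewrite -sumrB -big_split; apply: eq_bigr => w _ /=; ring.
rewrite e'_u; ring.
Qed.

Lemma leaf_shift_cost : is_leaf r parent u ->
  shift_cost <= 4%:R * (height r parent)%:R * e u.
Proof.
move=> leaf_u.
rewrite (eq_bigr (fun w => (e w / (1 - e u) - e w) * (lev w + (dist r parent u w)%:R)));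
  last by move=> w wu; rewrite /herc_update (negbTE wu) leaf_u.
apply: sum_rescale_le => [||w _|w _|]; rewrite ?eta_ge0 ?mulr_ge0 ?ler0n //.
  rewrite -natrD ler0n -natrM ler_nat.
  by have := level_le_2height w; have := dist_le_2height u w; lia.
by have := sum_eta_le1; rewrite (bigD1 u) //=; lra.
Qed.

Lemma inner_shift_cost : ~~ is_leaf r parent u -> shift_cost <= e u * lev u.
Proof.
move=> inner_u.
have e'_off w : w != u -> ~~ is_child r parent u w -> e' w = e w.
  by move=> wu /negbTE not_child; rewrite /herc_update (negbTE wu) inner_u not_child.
rewrite (bigID (is_child r parent u)) /= [X in _ + X]big1 ?addr0 => [|w /andP[wu nc]];
  last by rewrite e'_off ?subrr ?mul0r.
rewrite (eq_bigl (is_child r parent u)) => [|w]; last exact/andb_idl/child_neq.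
apply: le_trans (_ : \sum_(w | is_child r parent u w)
    (rank r parent s w)%:R / (rank r parent s u)%:R * (e u * lev u) <= _).
  apply: ler_sum => w uw.
  have e_w : e w = 0.
    by rewrite /eta (asleep_s alive_u (child_neq uw) (child_desc uw)).
  have shift_le : lev w + (dist r parent u w)%:R <= lev u.
    by rewrite -natrD ler_nat; have := level_child uw; have := dist_child uw; lia.
  rewrite /herc_update (negbTE (child_neq uw)) inner_u uw e_w subr0 [X in _ <= X]mulrA.
  by apply: ler_wpM2l => //; apply: mulr_ge0; rewrite ?divr_ge0 ?ler0n ?eta_ge0.
rewrite -mulr_suml -[X in _ <= X]mul1r ler_wpM2r ?mulr_ge0 ?eta_ge0 ?ler0n //.
exact/sum_ratio_le1/sum_rank_children.
Qed.

Lemma potential_step_le :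
  potential r parent (kill r parent s u) e' - potential r parent s e
    + herc_cost r parent R s u <= 0.
Proof.
rewrite potential_step_cost.
have h_ge0 : 0 <= ((height r parent)%:R : R) := ler0n _ _.
have eu_lev_ge0 : 0 <= e u * lev u by rewrite mulr_ge0 ?eta_ge0.
have [leaf_u|inner_u] := boolP (is_leaf r parent u).
  have := leaf_shift_cost leaf_u.
  have : e u <= (rank r parent s r)%:R^-1.
    rewrite /eta alive_u -[X in _ <= X]mul1r ler_wpM2r ?invr_ge0 ?ler0n //.
    by rewrite lern1 rank_leaf_le1.
  rewrite (rank_kill_leaf asleep_s alive_u leaf_u) harmonicS.
  move=> /(ler_wpM2l h_ge0) eu_le shift_le.
  set q := (_.+1%:R^-1 : R) in eu_le *; lra.
rewrite (rank_kill_inner asleep_s alive_u inner_u) subrr mulr0 add0r.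
have := inner_shift_cost inner_u; lra.
Qed.

End HercStep.

End RootedTree.

Local Open Scope ring_scope.

Theorem lemma3 (R : realFieldType) (T : finType) (r : T) (parent : T -> T)
    (s : state T) (u : T) :
  is_rooted_tree r parent ->
  reachable r parent s ->
  ~~ game_ended s ->
  is_alive (s u) ->
  potential r parent (kill r parent s u) (herc_update r parent R s u)
    - potential r parent s (eta r parent R s)
  <= - herc_cost r parent R s u.
Proof.
(* The bound holds in every reachable state, whether or not the game has ended. *)
move=> [parent_r reaches_r] reach_s _ alive_u.
rewrite -subr_le0 opprK.
exact: potential_step_le (reachable_asleep_below parent_r reaches_r reach_s) alive_u.
Qed.
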